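(* Let $\mathbf{k}=(k_1,k_2,\ldots)\in\mathcal{T}$ and set $\Delta_r=\zeta^{\star}(k_1,\ldots,k_r,1)-\zeta^{\star}(k_1,\ldots,k_r)$. Then $\lim_{r\to\infty}\Delta_r=0$.
   Context: $\zeta^{\star}(k_1,\ldots,k_r)=\sum_{n_1\geq\cdots\geq n_r\geq 1}\frac{1}{n_1^{k_1}\cdots n_r^{k_r}}$ for $k_1\geq2$, $k_2,\ldots,k_r\geq1$. $\mathcal{T}$ is the set of infinite sequences $(k_1,k_2,\ldots)$ of positive integers with $k_1\geq2$ and such that if $k_1=2$ then $k_s\geq2$ for some $s\geq2$. *)

From Stdlib Require Import Reals Lra Lia List.
From Coquelicot Require Import Coquelicot.
Open Scope R_scope.

(* Truncated multiple zeta-star value: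
   Hstar [k1;...;kr] N = sum_{N >= n1 >= n2 >= ... >= nr >= 1} 1/(n1^k1 ... nr^kr).
   (Hstar [] N = 1, the empty product.) *)
Fixpoint Hstar (ks : list nat) (N : nat) : R :=
  match ks with
  | nil => 1
  | k :: ks' => sum_n_m (fun n => / (INR n ^ k) * Hstar ks' n) 1 N
  end.

(* zeta^*(k1,...,kr) = lim_{N -> oo} of the truncated sums
   (the series has nonnegative terms; it converges when k1 >= 2). *)
Definition zeta_star (ks : list nat) : R := real (Lim_seq (fun N => Hstar ks N)).

(* Infinite index sequences k = (k_1, k_2, ...), stored 1-based as k : nat -> nat
   (the value k 0 is irrelevant).  Membership in the set T of the paper. *)
Definition in_T (k : nat -> nat) : Prop :=
  (forall i, (1 <= i)%nat -> (1 <= k i)%nat) /\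
  (2 <= k 1%nat)%nat /\
  (k 1%nat = 2%nat -> exists s, (2 <= s)%nat /\ (2 <= k s)%nat).

Definition prefix (k : nat -> nat) (r : nat) : list nat := map k (seq 1%nat r).

Definition zs_Delta (k : nat -> nat) (r : nat) : R :=
  zeta_star (prefix k r ++ 1%nat :: nil) - zeta_star (prefix k r).

From Stdlib Require Import Reals Lra Lia List.
From Coquelicot Require Import Coquelicot.
Open Scope R_scope.

(* Write g_ks(N) = Hstar (ks ++ [1]) N - Hstar ks N.  Peeling off the first index gives
   g_(k :: ks)(N) = sum_(m <= N) g_ks(m) / m^k, with g_[](N) = H_N - 1, so every
   truncated sum is an iterate of the operator X |-> (N |-> sum_(m <= N) X(m) / m^k).
   These iterates are compared with the discrete powers dpow a m ~ m^a, for which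
   sum_(m <= n) dpow a m / m = 1 + (dpow a n - 1) / a holds exactly.  With a = 3/2,
   every index k_2, ..., k_r multiplies the bound by 2/3, so g_(k_2..k_r)(m) is at most
   (2/3)^r m^(3/2).  An index >= 2 trades m^(3/2) for m^(1/2); at exponent 1/2 every
   further index only costs a factor 3, and a leading index >= 2 then sums
   m^(1/2) / m^2 to a bounded quantity.  For k in T, either k_1 >= 3 does both jobs or
   k_1 = 2 and some later k_s >= 2 lowers the exponent first, so Delta_r = O((2/3)^r). *)

Definition hsum (k : nat) (X : nat -> R) (N : nat) : R :=
  sum_n_m (fun m => / (INR m ^ k) * X m) 1 N.

Definition hiter (ks : list nat) (X : nat -> R) : nat -> R := fold_right hsum X ks.

Lemma INR_ge1 m : (1 <= m)%nat -> 1 <= INR m.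
Proof. intros Hm. apply (le_INR 1) in Hm. simpl in Hm. lra. Qed.

Lemma inv_pow_INR_pos m k : (1 <= m)%nat -> 0 < / (INR m ^ k).
Proof. intros Hm. apply Rinv_0_lt_compat, pow_lt. pose proof (INR_ge1 m Hm). lra. Qed.

Lemma inv_pow_INR_le m k k' : (1 <= m)%nat -> (k <= k')%nat ->
  / (INR m ^ k') <= / (INR m ^ k).
Proof.
  intros Hm Hk. pose proof (INR_ge1 m Hm).
  apply Rinv_le_contravar; [apply pow_lt; lra | apply Rle_pow; auto].
Qed.

Lemma hsum_0 k X : hsum k X 0 = 0.
Proof. unfold hsum. rewrite sum_n_m_zero by lia. reflexivity. Qed.

Lemma hsum_S k X N : hsum k X (S N) = hsum k X N + / (INR (S N) ^ k) * X (S N).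
Proof.
  unfold hsum. destruct N.
  - rewrite sum_n_n, sum_n_m_zero by lia. symmetry. apply Rplus_0_l.
  - rewrite sum_n_Sm by lia. reflexivity.
Qed.

Lemma hsum_ext k X Y N : (forall m, (1 <= m)%nat -> X m = Y m) -> hsum k X N = hsum k Y N.
Proof.
  intros HXY. apply sum_n_m_ext_loc. intros m Hm. rewrite HXY by lia. reflexivity.
Qed.

Lemma hsum_scal k c X N : hsum k (fun m => c * X m) N = c * hsum k X N.
Proof. induction N; rewrite ?hsum_S, ?hsum_0; [ring | rewrite IHN; ring]. Qed.

Lemma hsum_minus k X Y N : hsum k (fun m => X m - Y m) N = hsum k X N - hsum k Y N.
Proof. induction N; rewrite ?hsum_S, ?hsum_0; [ring | rewrite IHN; ring]. Qed.

Lemma hsum_pow_succ k X N : hsum (S k) X N = hsum k (fun m => / INR m * X m) N.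
Proof.
  unfold hsum. apply sum_n_m_ext. intros m.
  rewrite <- tech_pow_Rmult, Rinv_mult, <- Rmult_assoc, (Rmult_comm (/ INR m)).
  reflexivity.
Qed.

Lemma hsum_le k X Y N : (forall m, (1 <= m)%nat -> X m <= Y m) -> hsum k X N <= hsum k Y N.
Proof.
  intros HXY. induction N; rewrite ?hsum_S, ?hsum_0; [lra|].
  pose proof (inv_pow_INR_pos (S N) k ltac:(lia)).
  pose proof (HXY (S N) ltac:(lia)). nra.
Qed.

Lemma hsum_nonneg k X N : (forall m, (1 <= m)%nat -> 0 <= X m) -> 0 <= hsum k X N.
Proof.
  intros HX. induction N; rewrite ?hsum_S, ?hsum_0; [lra|].
  pose proof (inv_pow_INR_pos (S N) k ltac:(lia)).
  pose proof (HX (S N) ltac:(lia)). nra.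
Qed.

Lemma hsum_incr k X N : (forall m, (1 <= m)%nat -> 0 <= X m) -> hsum k X N <= hsum k X (S N).
Proof.
  intros HX. rewrite hsum_S.
  pose proof (inv_pow_INR_pos (S N) k ltac:(lia)).
  pose proof (HX (S N) ltac:(lia)). nra.
Qed.

Lemma hsum_le_pow k k' X N : (k <= k')%nat -> (forall m, (1 <= m)%nat -> 0 <= X m) ->
  hsum k' X N <= hsum k X N.
Proof.
  intros Hk HX. induction N; rewrite ?hsum_S, ?hsum_0; [lra|].
  pose proof (inv_pow_INR_le (S N) k k' ltac:(lia) Hk).
  pose proof (HX (S N) ltac:(lia)). nra.
Qed.

(* dpow a m = prod_(j = 2..m) j / (j - a), asymptotic to Gamma(2 - a) m^a. *)
Fixpoint dpow (a : R) (m : nat) : R :=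
  match m with
  | S (S _ as m') => dpow a m' * (INR m / (INR m - a))
  | _ => 1
  end.

Lemma dpow_S a m : (1 <= m)%nat -> dpow a (S m) = dpow a m * (INR (S m) / (INR (S m) - a)).
Proof. intros Hm. destruct m; [lia | reflexivity]. Qed.

Lemma dpow_pos a m : a < 2 -> 0 < dpow a m.
Proof.
  intros Ha. induction m as [|[|m] IH]; [simpl; lra | simpl; lra |].
  rewrite dpow_S, !S_INR by lia. pose proof (pos_INR m).
  apply Rmult_lt_0_compat, Rdiv_lt_0_compat; lra.
Qed.

Lemma dpow_ge1 a m : 0 <= a < 2 -> 1 <= dpow a m.
Proof.
  intros Ha. induction m as [|[|m] IH]; [simpl; lra | simpl; lra |].
  rewrite dpow_S, !S_INR by lia. pose proof (pos_INR m).
  assert (1 <= (INR m + 1 + 1) / (INR m + 1 + 1 - a)) by (apply Rle_div_r; lra).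
  nra.
Qed.

Lemma dpow_diff a m : a < 2 -> (1 <= m)%nat ->
  dpow a (S m) - dpow a m = a / INR (S m) * dpow a (S m).
Proof.
  intros Ha Hm. rewrite dpow_S by lia. pose proof (INR_ge1 m Hm).
  rewrite S_INR. field. lra.
Qed.

Lemma dpow_shift a m : a < 2 -> (1 <= m)%nat ->
  dpow a m * (2 - a) = dpow (a - 1) m * (INR m - a + 1).
Proof.
  intros Ha Hm. induction m as [|[|m] IH]; [lia | simpl; lra |].
  rewrite !(dpow_S _ (S m)) by lia.
  pose proof (INR_ge1 (S m) ltac:(lia)).
  transitivity (dpow a (S m) * (2 - a) * (INR (S (S m)) / (INR (S (S m)) - a))); [ring|].
  rewrite IH by lia. rewrite (S_INR (S m)). field. lra.
Qed.

Lemma hsum_dpow a n : a <> 0 -> a < 2 -> (1 <= n)%nat ->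
  hsum 1 (dpow a) n = 1 + (dpow a n - 1) / a.
Proof.
  intros Ha0 Ha Hn. induction n as [|[|n] IH]; [lia | |].
  - rewrite hsum_S, hsum_0. simpl. field. auto.
  - rewrite hsum_S, IH by lia.
    pose proof (INR_ge1 (S (S n)) ltac:(lia)).
    assert (Hdiff : dpow a (S (S n)) - dpow a (S n) = a * (/ INR (S (S n)) * dpow a (S (S n))))
      by (rewrite dpow_diff by (lra || lia); unfold Rdiv; ring).
    rewrite pow_1.
    replace (dpow a (S (S n)) - 1)
      with (dpow a (S n) - 1 + a * (/ INR (S (S n)) * dpow a (S (S n)))) by lra.
    field. split; [lra | auto].
Qed.

Lemma harmonic_ge1 n : (1 <= n)%nat -> 1 <= hsum 1 (fun _ => 1) n.
Proof.
  intros Hn. induction n as [|[|n] IH]; [lia | |].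
  - rewrite hsum_S, hsum_0. simpl. rewrite !Rmult_1_r, Rinv_1. lra.
  - pose proof (hsum_incr 1 (fun _ => 1) (S n) ltac:(intros; lra)).
    specialize (IH ltac:(lia)). lra.
Qed.

Section DpowMajorant.

Variable a : R.
Hypothesis Ha : 0 < a < 2.

Lemma hsum_dpow_le k X C : (1 <= k)%nat ->
  (forall m, (1 <= m)%nat -> 0 <= X m <= C * dpow a m) ->
  forall n, (1 <= n)%nat -> 0 <= hsum k X n <= C * (1 + / a) * dpow a n.
Proof.
  intros Hk HX n Hn.
  assert (HC : 0 <= C) by (pose proof (HX 1%nat ltac:(lia)); simpl in *; lra).
  split; [apply hsum_nonneg; intros m Hm; apply HX, Hm |].
  assert (Hsum : hsum k X n <= C * hsum 1 (dpow a) n).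
  { rewrite <- hsum_scal. eapply Rle_trans.
    - apply hsum_le_pow; [exact Hk | intros m Hm; apply HX, Hm].
    - apply hsum_le. intros m Hm. apply HX, Hm. }
  rewrite hsum_dpow in Hsum by (auto; lra).
  pose proof (dpow_ge1 a n ltac:(lra)).
  assert (1 + (dpow a n - 1) / a <= (1 + / a) * dpow a n)
    by (unfold Rdiv; pose proof (Rinv_0_lt_compat a ltac:(lra)); nra).
  rewrite Rmult_assoc. nra.
Qed.

Lemma hsum_dpow_sub1_le k X C : (1 <= k)%nat -> 0 <= C ->
  (forall m, (1 <= m)%nat -> 0 <= X m <= C * (dpow a m - 1)) ->
  forall n, (1 <= n)%nat -> 0 <= hsum k X n <= C / a * (dpow a n - 1).
Proof.
  intros Hk HC HX n Hn.
  split; [apply hsum_nonneg; intros m Hm; apply HX, Hm |].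
  assert (Hsum : hsum k X n <= C * (hsum 1 (dpow a) n - hsum 1 (fun _ => 1) n)).
  { rewrite <- hsum_minus, <- hsum_scal. eapply Rle_trans.
    - apply hsum_le_pow; [exact Hk | intros m Hm; apply HX, Hm].
    - apply hsum_le. intros m Hm. apply HX, Hm. }
  rewrite hsum_dpow in Hsum by (auto; lra).
  pose proof (harmonic_ge1 n Hn).
  replace (C / a * (dpow a n - 1)) with (C * (1 + (dpow a n - 1) / a - 1)) by (field; lra).
  nra.
Qed.

Lemma hiter_dpow_le ks X C : List.Forall (le 1) ks ->
  (forall m, (1 <= m)%nat -> 0 <= X m <= C * dpow a m) ->
  forall n, (1 <= n)%nat -> 0 <= hiter ks X n <= C * (1 + / a) ^ length ks * dpow a n.
Proof.
  intros Hks HX. induction Hks as [|k ks Hk _ IH]; intros n Hn.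
  - simpl. rewrite Rmult_1_r. apply HX, Hn.
  - simpl length. rewrite <- tech_pow_Rmult.
    replace (C * ((1 + / a) * (1 + / a) ^ length ks))
      with (C * (1 + / a) ^ length ks * (1 + / a)) by ring.
    apply (hsum_dpow_le k); assumption.
Qed.

Lemma hiter_dpow_sub1_le ks X C : List.Forall (le 1) ks -> 0 <= C ->
  (forall m, (1 <= m)%nat -> 0 <= X m <= C * (dpow a m - 1)) ->
  forall n, (1 <= n)%nat -> 0 <= hiter ks X n <= C * (/ a) ^ length ks * (dpow a n - 1).
Proof.
  intros Hks HC HX. induction Hks as [|k ks Hk _ IH]; intros n Hn.
  - simpl. rewrite Rmult_1_r. apply HX, Hn.
  - simpl length. rewrite <- tech_pow_Rmult.
    replace (C * (/ a * (/ a) ^ length ks))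
      with (C * (/ a) ^ length ks / a) by (field; lra).
    apply (hsum_dpow_sub1_le k); try assumption.
    apply Rmult_le_pos; [exact HC | apply pow_le; left; apply Rinv_0_lt_compat; lra].
Qed.

End DpowMajorant.

Definition gap (ks : list nat) (N : nat) : R := Hstar (ks ++ 1%nat :: nil) N - Hstar ks N.

Lemma Hstar_cons k ks N : Hstar (k :: ks) N = hsum k (Hstar ks) N.
Proof. reflexivity. Qed.

Lemma Hstar_hiter ks N : Hstar ks N = hiter ks (fun _ => 1) N.
Proof.
  revert N. induction ks as [|k ks IH]; intros N; [reflexivity|].
  apply hsum_ext. intros m _. apply IH.
Qed.

Lemma gap_cons k ks N : gap (k :: ks) N = hsum k (gap ks) N.
Proof. unfold gap. rewrite <- app_comm_cons, !Hstar_cons, hsum_minus. reflexivity. Qed.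

Lemma gap_app ks ls N : gap (ks ++ ls) N = hiter ks (gap ls) N.
Proof.
  revert N. induction ks as [|k ks IH]; intros N; [reflexivity|].
  rewrite <- app_comm_cons, gap_cons. apply hsum_ext. intros m _. apply IH.
Qed.

Lemma gap_nil_le a n : 0 < a < 2 -> (1 <= n)%nat -> 0 <= gap nil n <= / a * (dpow a n - 1).
Proof.
  intros Ha Hn. change (gap nil n) with (hsum 1 (fun _ => 1) n - 1).
  pose proof (harmonic_ge1 n Hn).
  assert (Hle : hsum 1 (fun _ => 1) n <= hsum 1 (dpow a) n)
    by (apply hsum_le; intros m _; apply dpow_ge1; lra).
  rewrite hsum_dpow in Hle by (auto; lra).
  split; [lra|]. unfold Rdiv in Hle. lra.
Qed.

Lemma gap_le a ks n : 0 < a < 2 -> List.Forall (le 1) ks -> (1 <= n)%nat ->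
  0 <= gap ks n <= (/ a) ^ S (length ks) * (dpow a n - 1).
Proof.
  intros Ha Hks Hn. rewrite <- (app_nil_r ks), gap_app, app_nil_r.
  assert (Hinv : 0 < / a) by (apply Rinv_0_lt_compat; lra).
  replace ((/ a) ^ S (length ks)) with (/ a * (/ a) ^ length ks) by reflexivity.
  apply hiter_dpow_sub1_le; auto; [lra |].
  intros m Hm. apply gap_nil_le; assumption.
Qed.

Lemma Hstar_le a ks n : 0 < a < 2 -> List.Forall (le 1) ks -> (1 <= n)%nat ->
  0 <= Hstar ks n <= (1 + / a) ^ length ks * dpow a n.
Proof.
  intros Ha Hks Hn. rewrite Hstar_hiter, <- (Rmult_1_l ((1 + / a) ^ length ks)).
  apply hiter_dpow_le; auto.
  intros m _. pose proof (dpow_ge1 a m ltac:(lra)). lra.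
Qed.

Lemma dpow_3half_le m : (1 <= m)%nat -> dpow (3/2) m <= 2 * INR m * dpow (1/2) m.
Proof.
  intros Hm. pose proof (dpow_shift (3/2) m ltac:(lra) Hm) as Hshift.
  replace (3/2 - 1) with (1/2) in Hshift by field.
  pose proof (dpow_pos (1/2) m ltac:(lra)). lra.
Qed.

Lemma dpow_half_le m : (1 <= m)%nat -> dpow (1/2) m <= INR m * dpow (-(1/2)) m.
Proof.
  intros Hm. pose proof (dpow_shift (1/2) m ltac:(lra) Hm) as Hshift.
  replace (1/2 - 1) with (-(1/2)) in Hshift by field.
  pose proof (dpow_pos (-(1/2)) m ltac:(lra)). pose proof (INR_ge1 m Hm). nra.
Qed.

Lemma inv_mul_dpow_3half_le X C :
  (forall m, (1 <= m)%nat -> 0 <= X m <= C * dpow (3/2) m) ->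
  forall m, (1 <= m)%nat -> 0 <= / INR m * X m <= 2 * C * dpow (1/2) m.
Proof.
  intros HX m Hm.
  assert (HC : 0 <= C) by (pose proof (HX 1%nat ltac:(lia)); simpl in *; lra).
  pose proof (INR_ge1 m Hm). pose proof (Rinv_0_lt_compat (INR m) ltac:(lra)).
  destruct (HX m Hm) as [HX0 HXm]. pose proof (dpow_3half_le m Hm).
  split; [nra|].
  replace (2 * C * dpow (1/2) m) with (/ INR m * (C * (2 * INR m * dpow (1/2) m)))
    by (field; lra).
  apply Rmult_le_compat_l; nra.
Qed.

Lemma hsum_dpow_half_bounded k X C : (2 <= k)%nat ->
  (forall m, (1 <= m)%nat -> 0 <= X m <= C * dpow (1/2) m) ->
  forall N, 0 <= hsum k X N <= 3 * C.
Proof.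
  intros Hk HX N.
  assert (HC : 0 <= C) by (pose proof (HX 1%nat ltac:(lia)); simpl in *; lra).
  split; [apply hsum_nonneg; intros m Hm; apply HX, Hm |].
  destruct N as [|N]; [rewrite hsum_0; lra|].
  (* dpow (1/2) m / m^2 <= dpow (-1/2) m / m, whose sum is exactly 3 - 2 dpow (-1/2) N. *)
  assert (Hsum : hsum k X (S N) <= C * hsum 1 (dpow (-(1/2))) (S N)).
  { rewrite <- hsum_scal. eapply Rle_trans.
    { apply (hsum_le_pow 2); [exact Hk | intros m Hm; apply HX, Hm]. }
    rewrite hsum_pow_succ. apply hsum_le. intros m Hm.
    pose proof (INR_ge1 m Hm). pose proof (Rinv_0_lt_compat (INR m) ltac:(lra)).
    destruct (HX m Hm) as [_ HXm].
    apply Rle_trans with (/ INR m * (C * (INR m * dpow (-(1/2)) m))).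
    { apply Rmult_le_compat_l; [lra|]. eapply Rle_trans; [apply HXm|].
      apply Rmult_le_compat_l; [exact HC | apply dpow_half_le, Hm]. }
    right. field. lra. }
  rewrite hsum_dpow in Hsum by (lra || lia).
  pose proof (dpow_pos (-(1/2)) (S N) ltac:(lra)).
  replace (1 + (dpow (-(1/2)) (S N) - 1) / -(1/2)) with (3 - 2 * dpow (-(1/2)) (S N))
    in Hsum by field.
  nra.
Qed.

Lemma Hstar_bounded k ks : (2 <= k)%nat -> List.Forall (le 1) ks ->
  forall N, 0 <= Hstar (k :: ks) N <= 3 * 3 ^ length ks.
Proof.
  intros Hk Hks N. rewrite Hstar_cons. apply hsum_dpow_half_bounded; [exact Hk|].
  intros m Hm. replace 3 with (1 + / (1/2)) at 1 by field.
  apply Hstar_le; auto; lra.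
Qed.

Lemma Hstar_cvg k ks : (2 <= k)%nat -> List.Forall (le 1) ks ->
  is_lim_seq (Hstar (k :: ks)) (zeta_star (k :: ks)).
Proof.
  intros Hk Hks.
  assert (Hfin : ex_finite_lim_seq (Hstar (k :: ks))).
  { apply ex_finite_lim_seq_incr with (M := 3 * 3 ^ length ks).
    - intros n. rewrite !Hstar_cons. apply hsum_incr.
      intros m Hm. apply (Hstar_le (1/2)); auto; lra.
    - intros n. apply Hstar_bounded; assumption. }
  destruct Hfin as [L HL]. unfold zeta_star.
  replace (Lim_seq (fun N => Hstar (k :: ks) N)) with (Finite L)
    by (symmetry; apply is_lim_seq_unique, HL).
  exact HL.
Qed.

Lemma zeta_star_gap_le k ks e : (2 <= k)%nat -> List.Forall (le 1) ks ->
  (forall N, 0 <= gap (k :: ks) N <= e) ->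
  0 <= zeta_star ((k :: ks) ++ 1%nat :: nil) - zeta_star (k :: ks) <= e.
Proof.
  intros Hk Hks Hgap.
  assert (Hks1 : List.Forall (le 1) (ks ++ 1%nat :: nil))
    by (apply Forall_app; split; auto).
  pose proof (is_lim_seq_minus' _ _ _ _ (Hstar_cvg k _ Hk Hks1) (Hstar_cvg k _ Hk Hks)) as Hlim.
  split.
  - apply (is_lim_seq_le (fun _ => 0) _ 0 _ (fun N => proj1 (Hgap N)) (is_lim_seq_const 0) Hlim).
  - apply (is_lim_seq_le _ (fun _ => e) _ e (fun N => proj2 (Hgap N)) Hlim (is_lim_seq_const e)).
Qed.

Lemma gap_le_dpow_3half ks : List.Forall (le 1) ks ->
  forall m, (1 <= m)%nat -> 0 <= gap ks m <= (2/3) ^ S (length ks) * dpow (3/2) m.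
Proof.
  intros Hks m Hm. pose proof (gap_le (3/2) ks m ltac:(lra) Hks Hm) as Hgap.
  replace (/ (3/2)) with (2/3) in Hgap by field.
  pose proof (pow_le (2/3) (S (length ks)) ltac:(lra)). lra.
Qed.

Lemma gap_le_head_ge3 k ks : (3 <= k)%nat -> List.Forall (le 1) ks ->
  forall N, 0 <= gap (k :: ks) N <= 6 * (2/3) ^ S (length ks).
Proof.
  intros Hk Hks N. rewrite gap_cons.
  replace k with (S (k - 1)) by lia. rewrite hsum_pow_succ.
  replace (6 * (2/3) ^ S (length ks)) with (3 * (2 * (2/3) ^ S (length ks))) by ring.
  apply hsum_dpow_half_bounded; [lia|].
  apply inv_mul_dpow_3half_le, gap_le_dpow_3half, Hks.
Qed.

Lemma gap_le_later_ge2 k ks j ls : (2 <= k)%nat -> List.Forall (le 1) ks ->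
  (2 <= j)%nat -> List.Forall (le 1) ls ->
  forall N, 0 <= gap (k :: ks ++ j :: ls) N <= 18 * 3 ^ length ks * (2/3) ^ S (length ls).
Proof.
  intros Hk Hks Hj Hls.
  set (c := (2/3) ^ S (length ls)).
  assert (Hjls : forall m, (1 <= m)%nat -> 0 <= gap (j :: ls) m <= 6 * c * dpow (1/2) m).
  { intros m Hm. rewrite gap_cons.
    replace j with (S (j - 1)) by lia. rewrite hsum_pow_succ.
    replace (6 * c) with (2 * c * (1 + / (1/2))) by field.
    apply hsum_dpow_le; [lra | lia | | exact Hm].
    apply inv_mul_dpow_3half_le, gap_le_dpow_3half, Hls. }
  intros N. rewrite gap_cons.
  replace (18 * 3 ^ length ks * c) with (3 * (6 * c * 3 ^ length ks)) by ring.
  apply hsum_dpow_half_bounded; [exact Hk|].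
  intros m Hm. rewrite gap_app. replace 3 with (1 + / (1/2)) at 1 by field.
  apply hiter_dpow_le; auto; lra.
Qed.

Lemma Forall_map_seq_pos k a n : (1 <= a)%nat ->
  (forall i, (1 <= i)%nat -> (1 <= k i)%nat) -> List.Forall (le 1) (map k (seq a n)).
Proof.
  intros Ha Hk. apply List.Forall_forall. intros x Hx.
  apply in_map_iff in Hx as [i [<- Hi]]. apply in_seq in Hi. apply Hk. lia.
Qed.

Lemma zs_Delta_le_head_ge3 k : (forall i, (1 <= i)%nat -> (1 <= k i)%nat) -> (3 <= k 1%nat)%nat ->
  forall n, 0 <= zs_Delta k (n + 1) <= 4 * (2/3) ^ n.
Proof.
  intros Hpos Hk1 n. unfold zs_Delta.
  replace (prefix k (n + 1)) with (k 1%nat :: map k (seq 2 n))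
    by (unfold prefix; rewrite Nat.add_1_r; reflexivity).
  apply zeta_star_gap_le; [lia | apply Forall_map_seq_pos; auto |].
  replace (4 * (2/3) ^ n) with (6 * (2/3) ^ S (length (map k (seq 2 n))))
    by (rewrite length_map, length_seq; simpl; field).
  apply gap_le_head_ge3; [exact Hk1 | apply Forall_map_seq_pos; auto].
Qed.

Lemma zs_Delta_le_later_ge2 k s : (forall i, (1 <= i)%nat -> (1 <= k i)%nat) ->
  (2 <= k 1%nat)%nat -> (2 <= s)%nat -> (2 <= k s)%nat ->
  forall n, 0 <= zs_Delta k (n + s) <= 12 * 3 ^ (s - 2) * (2/3) ^ n.
Proof.
  intros Hpos Hk1 Hs Hks n. unfold zs_Delta.
  replace (prefix k (n + s))
    with (k 1%nat :: map k (seq 2 (s - 2)) ++ k s :: map k (seq (S s) n)).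
  2: { unfold prefix. replace (n + s)%nat with (S (s - 2 + S n)) by lia.
       cbn [seq map]. rewrite seq_app, map_app. replace (2 + (s - 2))%nat with s by lia.
       reflexivity. }
  apply zeta_star_gap_le;
    [lia | apply Forall_app; split; [|constructor; [lia|]]; apply Forall_map_seq_pos; auto; lia |].
  replace (12 * 3 ^ (s - 2) * (2/3) ^ n)
    with (18 * 3 ^ length (map k (seq 2 (s - 2))) * (2/3) ^ S (length (map k (seq (S s) n))))
    by (rewrite !length_map, !length_seq; simpl; field).
  apply gap_le_later_ge2; auto; apply Forall_map_seq_pos; auto; lia.
Qed.

Lemma is_lim_seq_geom_dominated (w : nat -> R) K q : Rabs q < 1 ->
  (forall n, 0 <= w n <= K * q ^ n) -> is_lim_seq w 0.
Proof.
  intros Hq Hw. apply is_lim_seq_le_le with (u := fun _ => 0) (w := fun n => K * q ^ n).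
  - exact Hw.
  - apply is_lim_seq_const.
  - replace (Finite 0) with (Rbar_mult K 0) by (simpl; f_equal; ring).
    apply is_lim_seq_scal_l, is_lim_seq_geom, Hq.
Qed.

Theorem lemma3p2 (k : nat -> nat) (hk : in_T k) :
  is_lim_seq (fun r => zs_Delta k r) 0%R.
Proof.
  destruct hk as [Hpos [Hk1 Hk1_eq2]].
  assert (Hq : Rabs (2/3) < 1) by (rewrite Rabs_right; lra).
  destruct (Nat.eq_dec (k 1%nat) 2) as [Heq | Hne].
  - destruct (Hk1_eq2 Heq) as [s [Hs Hks]].
    apply (is_lim_seq_incr_n _ s), (is_lim_seq_geom_dominated _ (12 * 3 ^ (s - 2)) _ Hq).
    apply zs_Delta_le_later_ge2; assumption.
  - apply (is_lim_seq_incr_n _ 1), (is_lim_seq_geom_dominated _ 4 _ Hq).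
    apply zs_Delta_le_head_ge3; [assumption | lia].
Qed.
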